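(* In the setting of the context, the following two conditions are equivalent: (MC1) for every continuous path $c:[0,\epsilon)\to G$ with $c(0)=e$, the path $t\mapsto \Xi(J_0\cdot c(t))$ in $K$ is constant equal to $J_0$; (MC2) up to shrinking $W$, for $g\in W$, $J_0\cdot g\in K$ implies $J_0\cdot g=J_0$.
   Context: $X$ is a compact connected smooth manifold, $\mathcal E$ a Banach manifold, $\mathcal I\subset\mathcal E$ a closed subset, $G$ a topological group with countable topology acting continuously on the right on $\mathcal E$ by smooth transformations preserving $\mathcal I$, $J_0\in\mathcal I$, $e$ the identity of $G$. There are a Banach space $T$, a homeomorphism $\phi:V\to W$ from a connected open neighbourhood $V$ of $0\in T$ onto a connected open neighbourhood $W$ of $e$, and a connected open neighbourhood $U$ of $J_0$ such that $(\xi,J)\mapsto J\cdot\phi(\xi)$ is smooth on $V\times U$, with differential $L$ at $(0,J_0)$; $\mathfrak e=\{\xi: L(\xi,0)=0\}$. Assume $\mathfrak e$ has a closed complement $\mathfrak e^\perp$ in $T$, $L(\xi,\omega)=\omega+P\xi$ with $P:T\to T_{J_0}\mathcal E$ bounded linear, and $\operatorname{Im}P$ is closed with closed complement $F^\perp$. Let $\tilde K\subset U$ be a submanifold through $J_0$ tangent to $F^\perp$, $K=\tilde K\cap\mathcal I$, and (after shrinking) let $\Phi(\xi,J)=J\cdot\phi(\xi)$ be an isomorphism from $(\mathfrak e^\perp\cap V)\times K$ onto $U\cap\mathcal I$. The retraction $\Xi:U\cap\mathcal I\to K$ is the second component of $\Phi^{-1}$. *)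

From HB Require Import structures.
From mathcomp Require Import all_boot all_order all_algebra.
From mathcomp Require Import all_classical all_reals all_analysis.
Set Implicit Arguments. Unset Strict Implicit. Unset Printing Implicit Defensive.
Import Order.TTheory GRing.Theory Num.Theory.
Import numFieldNormedType.Exports.
Local Open Scope classical_set_scope.
Local Open Scope ring_scope.

Definition topological_group (G : topologicalType)
  (mul : G -> G -> G) (inv : G -> G) (e : G) : Prop :=
  [/\ (forall x y z, mul x (mul y z) = mul (mul x y) z),
      (forall x, mul e x = x /\ mul x e = x),
      (forall x, mul (inv x) x = e /\ mul x (inv x) = e),
      continuous (fun p : G * G => mul p.1 p.2)
    & continuous inv].

Definition continuous_right_action (G E : topologicalType)
  (mul : G -> G -> G) (e : G) (act : E -> G -> E) : Prop :=
  [/\ (forall J, act J e = J),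
      (forall J g h, act (act J g) h = act J (mul g h))
    & continuous (fun p : E * G => act p.1 p.2)].

Definition linear_subspace (R : realType) (T : normedModType R) (S : set T) :=
  [/\ S 0, (forall x y, S x -> S y -> S (x + y))
    & (forall (a : R) x, S x -> S (a *: x))].

(* Condition (MC1): for every continuous path c : [0,eps) -> G with c 0 = e,
   the path t |-> Xi (J0 . c t) is (as a germ at t = 0, i.e. on some [0,delta))
   defined (J0 . c t lies in U /\ I) and constantly equal to J0. *)
Definition MC1 (R : realType) (G E : topologicalType) (e : G)
  (act : E -> G -> E) (UI : set E) (Xi : E -> E) (J0 : E) : Prop :=
  forall (eps : R) (c : R -> G), 0 < eps -> c 0 = e ->
    {within `[0, eps[, continuous c} ->
    exists2 delta : R, 0 < delta /\ delta <= eps &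
      forall t, 0 <= t < delta -> UI (act J0 (c t)) /\ Xi (act J0 (c t)) = J0.

Definition MC2 (G E : topologicalType) (e : G) (act : E -> G -> E)
  (W : set G) (K : set E) (J0 : E) : Prop :=
  exists W' : set G, [/\ open W', W' e, W' `<=` W &
    forall g, W' g -> K (act J0 g) -> act J0 g = J0].

From HB Require Import structures.
From mathcomp Require Import all_boot all_order all_algebra.
From mathcomp Require Import all_classical all_reals all_analysis.
From mathcomp Require Import ring lra.
Import Order.TTheory GRing.Theory Num.Theory.
Import numFieldNormedType.Exports.
Local Open Scope classical_set_scope.
Local Open Scope ring_scope.

(* MC2 -> MC1: for g near e the retraction of [J0 . g] equals
   [J0 . (g * phi(xi)^-1)], where [xi] is the slice coordinate of [J0 . g]; as
   [g * phi(xi)^-1] tends to [e], MC2 makes it [J0], and a continuous path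
   from [e] stays near [e] for small times.
   MC1 -> MC2: if MC2 fails there are [g_n -> e], with [|phi^-1 g_n| <= rho 4^-n],
   moving [J0] inside [K], where the retraction is the identity.  Gluing the
   chart coordinates of the [g_n] along piecewise linear hats at the times
   [2^-n] gives a path which is continuous at [0] thanks to the [4^-n] decay,
   and it contradicts MC1 at the times [2^-n]. *)

Section DyadicInterpolation.
Context {R : realType} {T : normedModType R}.
Implicit Types (s t : R) (n M : nat) (x : nat -> T).

Definition hat s : R := Num.max 0 (1 - 2 * `|s - 1|).

Lemma hat_ge0 s : 0 <= hat s.
Proof. by rewrite le_max lexx. Qed.

Lemma hat_le1 s : hat s <= 1.
Proof. by rewrite ge_max ler01 gerBl mulr_ge0. Qed.

Lemma hat1 : hat 1 = 1.
Proof. by rewrite /hat subrr normr0 mulr0 subr0 max_r ?ler01. Qed.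

Lemma hat_eq0 s : 2^-1 <= `|s - 1| -> hat s = 0.
Proof. by move=> hs; apply/max_l; lra. Qed.

Lemma hat_eq0_le s : s <= 2^-1 -> hat s = 0.
Proof. by move=> hs; apply: hat_eq0; rewrite ler0_norm ?opprB; lra. Qed.

Lemma hat_eq0_ge s : 3 / 2 <= s -> hat s = 0.
Proof. by move=> hs; apply: hat_eq0; rewrite ger0_norm; lra. Qed.

Lemma continuous_hat : continuous hat.
Proof.
move=> s; apply: (@continuous_max R R (cst 0) (fun s => 1 - 2 * `|s - 1|)).
  exact: cvg_cst.
apply: cvgB; first exact: cvg_cst.
apply: cvgM; first exact: cvg_cst.
by apply: cvg_norm; apply: cvgB; [exact: cvg_id | exact: cvg_cst].
Qed.

Lemma natr_lt_pow2 (n : nat) : n%:R < 2 ^+ n :> R.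
Proof. by rewrite -natrX ltr_nat ltn_expl. Qed.

Lemma pow2_mul_half_pow_le {k n : nat} :
  (k < n)%N -> 2 ^+ k * (2^-1) ^+ n <= 2^-1 :> R.
Proof.
move=> lt_kn; rewrite -(subnKC lt_kn) exprS exprD (mulrCA _ (2^-1)).
rewrite [2 ^+ k * _]mulrA -exprMn mulfV // expr1n mul1r.
by rewrite ler_piMr // exprn_ile1 //; lra.
Qed.

Lemma pow2_mul_half_pow_ge {k n : nat} :
  (n < k)%N -> 2 <= 2 ^+ k * (2^-1) ^+ n :> R.
Proof.
move=> lt_nk; rewrite -(subnKC lt_nk) exprS exprD -mulrA mulrAC -exprMn.
rewrite mulfV // expr1n mul1r ler_peMr // exprn_ege1 //; lra.
Qed.

Lemma sum_half_pow_le2 M : \sum_(0 <= n < M) (2^-1) ^+ n <= 2 :> R.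
Proof.
suff -> : \sum_(0 <= n < M) (2^-1) ^+ n = 2 - 2 * (2^-1) ^+ M :> R.
  by rewrite gerBl mulr_ge0 // exprn_ge0.
elim: M => [|M IH]; first by rewrite big_geq // expr0; lra.
by rewrite big_nat_recr //= IH exprS; set a := _ ^+ M; lra.
Qed.

(* [hat (2 ^+ n * t)] vanishes outside [2^-n/2 < t < 3 * 2^-n/2], so only the
   first [dyadic_size t] terms below can be nonzero. *)
Definition dyadic_size t : nat := (Num.truncn (2 / t)).+1.

Definition dyadic_interp (x : nat -> T) t : T :=
  \sum_(0 <= n < dyadic_size t) hat (2 ^+ n * t) *: x n.

Lemma hat_dyadic_eq0 t n : (dyadic_size t <= n)%N -> hat (2 ^+ n * t) = 0.
Proof.
move=> le_size_n; have [t_le0|t_gt0] := leP t 0.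
  apply: hat_eq0_le; suff : 2 ^+ n * t <= 0 by lra.
  by rewrite pmulr_rle0 ?exprn_gt0.
apply: hat_eq0_ge; suff : 2 / t < 2 ^+ n by rewrite ltr_pdivrMr // mulrC; lra.
have lt_size : 2 / t < (dyadic_size t)%:R by exact: truncnS_gt.
have le_size : (dyadic_size t)%:R <= n%:R :> R by rewrite ler_nat.
have := natr_lt_pow2 n; lra.
Qed.

Lemma dyadic_interpE x t M : (dyadic_size t <= M)%N ->
  dyadic_interp x t = \sum_(0 <= n < M) hat (2 ^+ n * t) *: x n.
Proof.
move=> le_size_M; rewrite /dyadic_interp (big_cat_nat _ le_size_M) //=.
rewrite [X in _ = _ + X]big1_seq ?addr0 // => n /andP[_].
by rewrite mem_index_iota => /andP[le_n _]; rewrite hat_dyadic_eq0 ?scale0r.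
Qed.

Lemma dyadic_interp_le0 x t : t <= 0 -> dyadic_interp x t = 0.
Proof.
move=> t_le0; rewrite /dyadic_interp big1 // => n _.
rewrite hat_eq0_le ?scale0r //; suff : 2 ^+ n * t <= 0 by lra.
by rewrite pmulr_rle0 ?exprn_gt0.
Qed.

Lemma dyadic_interp_half_pow x n : dyadic_interp x ((2^-1) ^+ n) = x n.
Proof.
have n_lt_size : (n < dyadic_size ((2^-1) ^+ n))%N.
  rewrite ltnS truncn_ge_nat; last by rewrite divr_ge0 // exprn_ge0.
  rewrite exprVn invrK; have := natr_lt_pow2 n.
  have : 0 <= 2 ^+ n :> R by rewrite exprn_ge0.
  lra.
rewrite /dyadic_interp (bigD1_seq (op := +%R) n) ?mem_index_iota ?iota_uniq //=.
rewrite -exprMn mulfV // expr1n hat1 scale1r big1 ?addr0 // => k ne_kn.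
case: (ltngtP k n) ne_kn => [lt_kn|lt_nk|->] //= _.
  by rewrite hat_eq0_le ?scale0r ?pow2_mul_half_pow_le.
rewrite hat_eq0_ge ?scale0r //; have := pow2_mul_half_pow_ge lt_nk; lra.
Qed.

Lemma dyadic_size_le s t : 0 < s -> s <= t -> (dyadic_size t <= dyadic_size s)%N.
Proof.
move=> s_gt0 le_st; rewrite ltnS le_truncn // ler_pM2l // lef_pV2 ?posrE //.
exact: lt_le_trans le_st.
Qed.

Lemma continuous_dyadic_partial_sum x M :
  continuous (fun t => \sum_(0 <= n < M) hat (2 ^+ n * t) *: x n).
Proof.
apply: continuous_big => [|n _ t]; first exact: add_continuous.
apply: cvgZ; last exact: cvg_cst.
apply: (continuous_comp (f := fun t => 2 ^+ n * t)); last exact: continuous_hat.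
by apply: cvgM; [exact: cvg_cst | exact: cvg_id].
Qed.

Section SmallData.
Context {x : nat -> T} {rho : R}.
Hypothesis x_small : forall n, `|x n| <= rho * ((2^-1) ^+ n) ^+ 2.

Let rho_ge0 : 0 <= rho.
Proof.
have := le_trans (normr_ge0 _) (x_small 0).
by rewrite expr0 expr1n mulr1.
Qed.

Lemma norm_hat_scale_le n t :
  `|hat (2 ^+ n * t) *: x n| <= 2 * rho * `|t| * (2^-1) ^+ n.
Proof.
rewrite normrZ ger0_norm ?hat_ge0 //.
have [->|hat_neq0] := eqVneq (hat (2 ^+ n * t)) 0.
  by rewrite mul0r !mulr_ge0 // exprn_ge0.
have half_lt : 2^-1 < 2 ^+ n * t.
  by rewrite ltNge; apply: contra_neqN hat_neq0 => /hat_eq0_le.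
have h_gt0 : 0 < (2^-1) ^+ n :> R by rewrite exprn_gt0.
have h_pow : (2^-1) ^+ n * 2 ^+ n = 1 :> R by rewrite -exprMn mulVf ?expr1n.
set h := (2^-1) ^+ n in h_gt0 h_pow *; set p := 2 ^+ n in half_lt h_pow.
have h_lt : h < 2 * t.
  have : h * (p * t) = t by rewrite mulrA h_pow mul1r.
  have : h * 2^-1 < h * (p * t) by rewrite ltr_pM2l.
  lra.
rewrite ger0_norm; last by lra.
have rho_h : rho * (h * h) <= rho * (h * (2 * t)).
  by apply: ler_wpM2l => //; apply: ler_wpM2l; [exact: ltW | exact: ltW].
have := hat_le1 (p * t); have := normr_ge0 (x n); have := x_small n.
rewrite expr2 -/h; nra.
Qed.

Lemma norm_dyadic_interp_le t : `|dyadic_interp x t| <= 4 * rho * `|t|.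
Proof.
apply: le_trans (ler_norm_sum _ _ _) _.
apply: le_trans (ler_sum _ (fun n _ => norm_hat_scale_le n t)) _.
rewrite -mulr_sumr (_ : 4 * rho * `|t| = 2 * rho * `|t| * 2); last by ring.
by apply: ler_wpM2l; [rewrite !mulr_ge0 | exact: sum_half_pow_le2].
Qed.

Lemma continuous_dyadic_interp : continuous (dyadic_interp x).
Proof.
move=> t0; have [t0_lt0|t0_gt0|->] := ltgtP t0 0.
- rewrite /continuous_at dyadic_interp_le0 ?ltW //; apply: cvg_near_cst.
  by near=> t; apply: dyadic_interp_le0; near: t; exact: lt_le_nbhsl.
- have near_partial_sum : {near t0, (fun t =>
      \sum_(0 <= n < dyadic_size (t0 / 2)) hat (2 ^+ n * t) *: x n)
      =1 dyadic_interp x}.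
    near=> t; apply/esym/dyadic_interpE/dyadic_size_le; first lra.
    by apply: ltW; near: t; apply: lt_nbhsr; lra.
  rewrite /continuous_at (@dyadic_interpE x t0 (dyadic_size (t0 / 2))); last first.
    by apply: dyadic_size_le; lra.
  apply: cvg_trans (near_eq_cvg near_partial_sum) _.
  exact: continuous_dyadic_partial_sum.
- have bound_cvg0 : 4 * rho * `|t| @[t --> (0 : R)] --> 4 * rho * `|0 : R|.
    apply: cvgM; first exact: cvg_cst.
    exact: (cvg_norm (@cvg_id _ (nbhs (0 : R)))).
  rewrite normr0 mulr0 in bound_cvg0.
  rewrite /continuous_at dyadic_interp_le0 //; apply/cvgr0Pnorm_lt => eps eps_gt0.
  near=> t; apply: le_lt_trans (norm_dyadic_interp_le t) _.
  by near: t; apply: cvgr_lt eps_gt0.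
Unshelve. all: by end_near.
Qed.

End SmallData.

End DyadicInterpolation.

Lemma exists_half_pow_lt {R : realType} {d : R} :
  0 < d -> exists n, (2^-1) ^+ n < d.
Proof.
move=> d_gt0; exists (Num.truncn d^-1).+1.
rewrite exprVn invf_plt ?posrE ?exprn_gt0 //.
exact: lt_trans (truncnS_gt _) (natr_lt_pow2 _).
Qed.

Lemma near_path_germ (R : realType) (X : topologicalType) (x0 : X) (P : set X)
    (eps : R) (c : R -> X) :
  (\forall y \near x0, P y) -> 0 < eps -> c 0 = x0 ->
  {within `[0, eps[, continuous c} ->
  exists2 delta : R, 0 < delta /\ delta <= eps &
    forall t, 0 <= t < delta -> P (c t).
Proof.
move=> P_near eps_gt0 c0 c_cont.
have c_cvg : c @ within `[0, eps[ (nbhs 0) --> x0.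
  rewrite -c0; move/subspace_continuousP: c_cont; apply.
  by rewrite /= in_itv /= lexx eps_gt0.
have /nbhs_ballP [d /= d_gt0 Pc] := c_cvg _ P_near.
exists (Num.min d eps); first by rewrite lt_min d_gt0 eps_gt0 ge_min lexx orbT.
move=> t /andP [t_ge0]; rewrite lt_min => /andP [t_lt_d t_lt_eps].
apply: Pc; last by rewrite /= in_itv /= t_ge0 t_lt_eps.
by rewrite /ball /= sub0r normrN ger0_norm.
Qed.

Section GroupAction.
Context {G : topologicalType} {mul : G -> G -> G} {inv : G -> G} {e : G}.
Hypothesis hG : topological_group mul inv e.
Context {E : topologicalType} {act : E -> G -> E}.
Hypothesis hact : continuous_right_action mul e act.

Lemma act_mulV J g : act (act J g) (inv g) = J.
Proof.
case: hG => _ _ /(_ g) [_ g_inv] _ _; case: hact => act_e act_mul _.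
by rewrite act_mul g_inv act_e.
Qed.

Lemma act_cvg_e J : act J g @[g --> e] --> J.
Proof.
case: hact => act_e _ act_cont; rewrite -{2}(act_e J).
by apply: continuous2_cvg; [exact: (act_cont (J, e)) | exact: cvg_cst | exact: cvg_id].
Qed.

Lemma cvg_mulV {S : Type} (F : set_system S) (f h : S -> G) : Filter F ->
  f @ F --> e -> h @ F --> e -> mul (f s) (inv (h s)) @[s --> F] --> e.
Proof.
case: hG => _ _ /(_ e) [_ e_inv] mul_cont inv_cont FF f_cvg h_cvg.
rewrite -[X in _ --> X]e_inv; apply: continuous2_cvg f_cvg _.
  exact: (mul_cont (e, inv e)).
exact: cvg_comp _ _ h_cvg (inv_cont e).
Qed.

End GroupAction.

Section SliceChart.
Set Implicit Arguments.
Context {R : realType} {G : topologicalType} {mul : G -> G -> G}.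
Context {inv : G -> G} {e : G}.
Hypothesis hG : topological_group mul inv e.
Context {E : topologicalType} {I : set E} {act : E -> G -> E}.
Hypothesis hact : continuous_right_action mul e act.
Hypothesis hactI : forall J g, I J -> I (act J g).
Context {J0 : E} {T : normedModType R} {V : set T} {W : set G} {phi : T -> G}.
Hypotheses (hJ0 : I J0) (hVo : open V) (hV0 : V 0) (hphi0 : phi 0 = e).
Hypothesis hphi_cont : {within V, continuous phi}.
Context {U : set E} {Eperp : set T} {K : set E} {Psi : E -> T * E}.
Hypotheses (hUo : open U) (hUJ0 : U J0) (hE0 : Eperp 0) (hJ0K : K J0).
Hypothesis hPsi_into :
  forall J, (U `&` I) J -> (Eperp `&` V) (Psi J).1 /\ K (Psi J).2.
Hypothesis hPhiPsi : forall J, (U `&` I) J -> act (Psi J).2 (phi (Psi J).1) = J.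
Hypothesis hPsiPhi :
  forall xi J, (Eperp `&` V) xi -> K J -> Psi (act J (phi xi)) = (xi, J).
Hypothesis hPsi_cont : {within U `&` I, continuous Psi}.

Lemma Psi_K J : K J -> Psi J = (0, J).
Proof.
case: hact => act_e _ _ KJ.
by rewrite -{1}(act_e J) -hphi0 hPsiPhi.
Qed.

Lemma act_shift_retraction h : (U `&` I) (act J0 h) ->
  act J0 (mul h (inv (phi (Psi (act J0 h)).1))) = (Psi (act J0 h)).2.
Proof.
case: hact => _ act_mul _ UI_J0h.
by rewrite -act_mul -{1}(hPhiPsi UI_J0h) (act_mulV hG hact).
Qed.

Lemma near_e_act_UI : \forall g \near e, (U `&` I) (act J0 g).
Proof.
near=> g; split; last exact: hactI.
near: g; apply: (act_cvg_e hact); exact: open_nbhs_nbhs.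
Unshelve. all: by end_near.
Qed.

Lemma Psi_act_cvg_e : Psi (act J0 g) @[g --> e] --> (0, J0).
Proof.
have act_within : act J0 g @[g --> e] --> within (U `&` I) (nbhs J0).
  move=> P /= P_near.
  apply: filterS2 (act_cvg_e hact J0 _ P_near) near_e_act_UI.
  by move=> g /= P_g /P_g.
rewrite -Psi_K //; apply: cvg_comp _ _ act_within _.
by move/subspace_continuousP: hPsi_cont; apply.
Qed.

Lemma MC2_near_e : MC2 e act W K J0 ->
  \forall g \near e, (U `&` I) (act J0 g) /\ (Psi (act J0 g)).2 = J0.
Proof.
move=> [W' [W'_open W'_e _ W'_fix]].
have phi_cont0 : {for 0, continuous phi}.
  move: hphi_cont; rewrite continuous_open_subspace // => /(_ 0).
  by apply; rewrite inE.
have shift_cvg : mul g (inv (phi (Psi (act J0 g)).1)) @[g --> e] --> e.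
  have xi_cvg : (Psi (act J0 g)).1 @[g --> e] --> (0 : T).
    exact: cvg_comp _ _ Psi_act_cvg_e cvg_fst.
  apply: (cvg_mulV hG) cvg_id _.
  by have := cvg_comp _ _ xi_cvg phi_cont0; rewrite hphi0.
near=> g.
have UI_g : (U `&` I) (act J0 g) by near: g; exact: near_e_act_UI.
split => //; rewrite -act_shift_retraction //; apply: W'_fix.
  by near: g; apply: shift_cvg; exact: open_nbhs_nbhs.
by rewrite act_shift_retraction //; exact: (hPsi_into UI_g).2.
Unshelve. all: by end_near.
Qed.

Lemma MC2_MC1 :
  MC2 e act W K J0 -> MC1 R e act (U `&` I) (fun J => (Psi J).2) J0.
Proof.
move=> /MC2_near_e near_fixed eps c eps_gt0 c0 c_cont.
exact: near_path_germ near_fixed eps_gt0 c0 c_cont.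
Qed.

Context {phiinv : G -> T}.
Hypotheses (hWo : open W) (hWe : W e).
Hypothesis hphiinv : forall g, W g -> V (phiinv g) /\ phi (phiinv g) = g.
Hypothesis hphiinv' : forall xi, V xi -> phiinv (phi xi) = xi.
Hypothesis hphiinv_cont : {within W, continuous phiinv}.

Lemma not_MC2_small_moves : ~ MC2 e act W K J0 -> forall s : R, 0 < s ->
  exists g, [/\ W g, `|phiinv g| < s, K (act J0 g) & act J0 g <> J0].
Proof.
move=> not_MC2 s s_gt0; apply: contrapT => no_move; apply: not_MC2.
exists (W `&` phiinv @^-1` ball 0 s); split.
- apply: (continuous_inP _ hWo).1; last exact: ball_open.
  by rewrite -continuous_open_subspace.
- by split => //=; rewrite -hphi0 hphiinv' //; exact: ballxx.
- by move=> g [].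
move=> g [W_g ball_g] K_J0g; apply: contrapT => moved; apply: no_move; exists g.
by split => //; move: ball_g; rewrite -ball_normE /ball_ /= sub0r normrN.
Qed.

Lemma MC1_MC2 :
  MC1 R e act (U `&` I) (fun J => (Psi J).2) J0 -> MC2 e act W K J0.
Proof.
move=> MC1_J0; apply: contrapT => not_MC2.
have [r r_gt0 ball_V] : exists2 r : R, 0 < r & forall y : T, `|y| < r -> V y.
  have /nbhs_norm0P [r /= r_gt0 ball_V] : \forall y \near (0 : T), V y.
    exact: open_nbhs_nbhs.
  by exists r.
pose rho := r / 4.
have radius_gt0 n : 0 < rho * ((2^-1) ^+ n) ^+ 2.
  by rewrite mulr_gt0 ?exprn_gt0 // /rho; lra.
have [g g_moves] := choice (fun n => not_MC2_small_moves not_MC2 _ (radius_gt0 n)).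
pose x n := phiinv (g n).
have x_small n : `|x n| <= rho * ((2^-1) ^+ n) ^+ 2.
  by case: (g_moves n) => _ /ltW.
pose c t := phi (dyadic_interp x t).
have c_cont : {within `[0, 1[, continuous c}.
  apply: continuous_in_subspaceT => t.
  rewrite inE /= in_itv /= => /andP [t_ge0 t_lt1].
  apply: continuous_comp; first exact: continuous_dyadic_interp.
  move: hphi_cont; rewrite continuous_open_subspace //; apply; rewrite inE.
  apply: ball_V; apply: le_lt_trans (norm_dyadic_interp_le x_small t) _.
  by rewrite ger0_norm // /rho; nra.
have c0 : c 0 = e by rewrite /c dyadic_interp_le0.
have [delta [delta_gt0 _] c_fixed] := MC1_J0 1 c ltr01 c0 c_cont.
have [n n_lt] := exists_half_pow_lt delta_gt0.
have [W_gn _ K_J0gn J0gn_moved] := g_moves n.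
have t_in : 0 <= (2^-1 : R) ^+ n < delta by rewrite n_lt exprn_ge0.
have [_] := c_fixed _ t_in.
rewrite /c dyadic_interp_half_pow (hphiinv W_gn).2 Psi_K //=; exact: J0gn_moved.
Qed.

End SliceChart.

Theorem mainTheorem2
  (R : realType)
  (G : topologicalType) (mul : G -> G -> G) (inv : G -> G) (e : G)
  (hG : topological_group mul inv e) (hGcount : @second_countable G)
  (E : topologicalType) (I : set E) (hI : closed I)
  (act : E -> G -> E) (hact : continuous_right_action mul e act)
  (hactI : forall J g, I J -> I (act J g))
  (J0 : E) (hJ0 : I J0)
  (T : completeNormedModType R)
  (V : set T) (W : set G) (phi : T -> G)
  (hV : [/\ open V, connected V & V 0])
  (hW : [/\ open W, connected W & W e])
  (hphi0 : phi 0 = e)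
  (hphiVW : forall xi, V xi -> W (phi xi))
  (hphi_cont : {within V, continuous phi})
  (phiinv : G -> T)
  (hphiinv : forall g, W g -> V (phiinv g) /\ phi (phiinv g) = g)
  (hphiinv' : forall xi, V xi -> phiinv (phi xi) = xi)
  (hphiinv_cont : {within W, continuous phiinv})
  (U : set E) (hU : [/\ open U, connected U & U J0])
  (Eperp : set T) (hEperp : linear_subspace Eperp) (hEperpc : closed Eperp)
  (K : set E) (hK : K `<=` U `&` I) (hJ0K : K J0)
  (Psi : E -> T * E)
  (hPsi_into : forall J, (U `&` I) J -> (Eperp `&` V) (Psi J).1 /\ K (Psi J).2)
  (hPhiPsi : forall J, (U `&` I) J -> act (Psi J).2 (phi (Psi J).1) = J)
  (hPsiPhi : forall xi J, (Eperp `&` V) xi -> K J -> Psi (act J (phi xi)) = (xi, J))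
  (hPhi_into : forall xi J, (Eperp `&` V) xi -> K J -> (U `&` I) (act J (phi xi)))
  (hPhi_cont : {within (Eperp `&` V) `*` K,
                 continuous (fun p : T * E => act p.2 (phi p.1))})
  (hPsi_cont : {within U `&` I, continuous Psi}) :
  MC1 R e act (U `&` I) (fun J => (Psi J).2) J0 <-> MC2 e act W K J0.
Proof.
case: hV => hVo _ hV0; case: hW => hWo _ hWe; case: hU => hUo _ hUJ0.
have hE0 : Eperp 0 by case: hEperp.
split.
- exact: (MC1_MC2 hact hVo hV0 hphi0 hphi_cont hE0 hPsiPhi
    hWo hWe hphiinv hphiinv' hphiinv_cont).
- exact: (MC2_MC1 hG hact hactI hJ0 hVo hV0 hphi0 hphi_cont
    hUo hUJ0 hE0 hJ0K hPsi_into hPhiPsi hPsiPhi hPsi_cont).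
Qed.
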